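(* Let $\mathcal X\subseteq\mathbb R^n$, $\bm c\in\mathbb R^n$, $\varepsilon\in(0,1)$, scenarios $\bm\xi^1,\dots,\bm\xi^N$ with probabilities $p_1,\dots,p_N\ge0$, $\sum_ip_i=1$, and $g(\bm x,\bm\xi)=\max_{j\in[J]}g_j(\bm x,\bm\xi)$. Consider $$v^*=\min_{\bm x\in\mathcal X}\Big\{\bm c^\top\bm x:\ \sum_{i=1}^N p_i\,\mathbb I[g(\bm x,\bm\xi^i)\le 0]\ge 1-\varepsilon\Big\},$$ let $\bm x^*$ be an optimal solution, $\bar I^*=\{i\in[N]: g(\bm x^*,\bm\xi^i)\le0\}$ and $\bar{\mathcal X}^*=\{\bm x\in\mathcal X: g(\bm x,\bm\xi^i)\le 0,\ i\in\bar I^*\}$. Suppose $\mathcal X$ is convex and $g(\cdot,\bm\xi^i)$ is convex for every $i\in\bar I^*$. If there exists $\bar I\subseteq\bar I^*$ such that (i) for each $i\in\bar I$ there exists $\bm x^i\in\bar{\mathcal X}^*$ with $g(\bm x^i,\bm\xi^i)<0$, and (ii) $\sum_{i\in\bar I}p_i>1-\varepsilon$, then $v^*=v^{\mathrm{CVaR}}_S$.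
   Context: $\mathbb I[\cdot]$ is the indicator function, $\bm e$ the all-ones vector. For $\bm\alpha\ge\bm e$, $v^{\mathrm{CVaR}}(\bm\alpha)=\min_{\bm x\in\mathcal X,\beta\le0,\bm s\ge\bm0}\{\bm c^\top\bm x:\ \varepsilon\beta+\sum_i p_is_i\le0,\ s_i+\beta\ge\alpha_i g(\bm x,\bm\xi^i),\ i\in[N]\}$ (value $+\infty$ if infeasible), and $v^{\mathrm{CVaR}}_S=\inf_{\bm\alpha\ge\bm e}v^{\mathrm{CVaR}}(\bm\alpha)$. *)

From HB Require Import structures.
From mathcomp Require Import all_boot all_order all_algebra.
From mathcomp Require Import classical_sets boolp reals constructive_ereal ereal.
Set Implicit Arguments. Unset Strict Implicit. Unset Printing Implicit Defensive.
Import Order.TTheory GRing.Theory Num.Theory.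
Local Open Scope ring_scope.
Local Open Scope classical_set_scope.

Section Defs.
Variable R : realType.

Definition dotv (n : nat) (c x : 'rV[R]_n) : R := \sum_(k < n) c 0 k * x 0 k.

Definition convex_set (n : nat) (X : set 'rV[R]_n) : Prop :=
  forall (x y : 'rV[R]_n) (t : R), 0 <= t -> t <= 1 -> X x -> X y ->
    X ((1 - t) *: x + t *: y).

Definition convex_fun (n : nat) (f : 'rV[R]_n -> R) : Prop :=
  forall (x y : 'rV[R]_n) (t : R), 0 <= t -> t <= 1 ->
    f ((1 - t) *: x + t *: y) <= (1 - t) * f x + t * f y.

(* g(x, xi) = max_{j in [J]} g_j(x, xi), with J = J'.+1 >= 1 component functions *)
Definition gmax (n J' : nat) (Xi : Type) (gj : 'I_J'.+1 -> 'rV[R]_n -> Xi -> R)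
  (x : 'rV[R]_n) (xi : Xi) : R :=
  \big[Num.max/gj ord0 x xi]_(j < J'.+1) gj j x xi.

(* v^CVaR(alpha); infimum over the feasible set, +oo if infeasible *)
Definition vCVaR (n N : nat) (X : set 'rV[R]_n) (c : 'rV[R]_n) (eps : R)
  (p : 'I_N -> R) (g : 'rV[R]_n -> 'I_N -> R) (alpha : 'I_N -> R) : \bar R :=
  ereal_inf [set (dotv c x)%:E | x in
    [set x | X x /\ exists (beta : R) (s : 'I_N -> R),
       beta <= 0 /\ (forall i, 0 <= s i) /\
       eps * beta + \sum_(i < N) p i * s i <= 0 /\
       (forall i, alpha i * g x i <= s i + beta)]].

Definition vCVaR_S (n N : nat) (X : set 'rV[R]_n) (c : 'rV[R]_n) (eps : R)
  (p : 'I_N -> R) (g : 'rV[R]_n -> 'I_N -> R) : \bar R :=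
  ereal_inf [set vCVaR X c eps p g alpha | alpha in
    [set alpha : 'I_N -> R | forall i, 1 <= alpha i]].

Definition cc_feasible (n N : nat) (X : set 'rV[R]_n) (eps : R)
  (p : 'I_N -> R) (g : 'rV[R]_n -> 'I_N -> R) (x : 'rV[R]_n) : Prop :=
  X x /\ 1 - eps <= \sum_(i < N) p i * (if g x i <= 0 then 1 else 0).

End Defs.

From HB Require Import structures.
From mathcomp Require Import all_boot all_order all_algebra.
From mathcomp Require Import classical_sets boolp reals constructive_ereal ereal.
From mathcomp Require Import lra.
Import Order.TTheory GRing.Theory Num.Theory.
Local Open Scope ring_scope.
Local Open Scope classical_set_scope.

(* If alpha >= 1 and x satisfies the CVaR constraints, every violated scenario
   forces s_i > -beta, so the violated mass is at most eps: CVaR-feasible points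
   are chance-feasible and v* <= v^CVaR_S.  Conversely, averaging the Slater
   points gives y in Xbar* with g(y, xi^i) < 0 on all of Ibar; by convexity
   x_t = (1 - t) x* + t y is strictly feasible on Ibar for t in (0, 1], and its
   cost tends to v* as t -> 0.  A point strictly feasible on a scenario set of
   mass > 1 - eps is CVaR-feasible once alpha is large on that set. *)

(* For G i = g(x, xi^i) these are the constraints of v^CVaR(alpha) on x: the
   feasible set in vCVaR is [set x | X x /\ cvar_constraint eps p (g x) alpha]
   up to conversion. *)
Definition cvar_constraint {R : realType} {N : nat} (eps : R)
  (p G alpha : 'I_N -> R) : Prop :=
  exists (beta : R) (s : 'I_N -> R),
    beta <= 0 /\ (forall i, 0 <= s i) /\
    eps * beta + \sum_(i < N) p i * s i <= 0 /\
    (forall i, alpha i * G i <= s i + beta).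

Section CVaRConstraint.
Context {R : realType} {N : nat} {eps : R} {p : 'I_N -> R}.
Hypotheses (p_ge0 : forall i, 0 <= p i) (p_sum1 : \sum_(i < N) p i = 1).

Lemma violated_mass_le (G s : 'I_N -> R) (beta : R) :
  0 <= eps -> beta <= 0 -> (forall i, 0 <= s i) ->
  eps * beta + \sum_(i < N) p i * s i <= 0 ->
  (forall i, 0 < G i -> - beta < s i) ->
  \sum_(i < N | 0 < G i) p i <= eps.
Proof.
move=> eps_ge0 beta_le0 s_ge0 hsum s_gt.
have ps_ge0 i : 0 <= p i * s i by rewrite mulr_ge0.
have [beta_lt0 | beta_ge0] := ltrP beta 0.
  have nbeta_gt0 : 0 < - beta by rewrite oppr_gt0.
  rewrite -(ler_pM2r nbeta_gt0) mulr_suml.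
  apply: (le_trans (y := \sum_(i < N) p i * s i)); last lra.
  rewrite [leRHS](bigID (fun i => 0 < G i)) /= -[leLHS]addr0.
  apply: lerD; last exact: sumr_ge0.
  by apply: ler_sum => i /s_gt/ltW; apply: ler_wpM2l.
have beta0 : beta = 0 by apply/eqP; rewrite eq_le beta_le0.
have ps0 : \sum_(i < N) p i * s i = 0.
  by apply/eqP; rewrite eq_le sumr_ge0 // andbT; move: hsum; rewrite beta0; lra.
rewrite big1 // => i /[dup] /s_gt; rewrite beta0 oppr0 => s_gt0 _.
have /eqP := (psumr_eq0P (fun i _ => ps_ge0 i) ps0 (i := i) isT).
by rewrite mulf_eq0 (gt_eqF s_gt0) orbF => /eqP.
Qed.

Lemma cvar_constraint_chance (G alpha : 'I_N -> R) :
  0 <= eps -> (forall i, 1 <= alpha i) -> cvar_constraint eps p G alpha ->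
  1 - eps <= \sum_(i < N) p i * (if G i <= 0 then 1 else 0).
Proof.
move=> eps_ge0 alpha_ge1 [beta [s [beta_le0 [s_ge0 [hsum hG]]]]].
have s_gt i : 0 < G i -> - beta < s i.
  move=> G_gt0; have := hG i; have : 0 < alpha i * G i.
    by rewrite mulr_gt0 // (lt_le_trans ltr01).
  lra.
have := violated_mass_le G s beta eps_ge0 beta_le0 s_ge0 hsum s_gt.
have -> : \sum_(i < N) p i * (if G i <= 0 then 1 else 0) = \sum_(i < N | G i <= 0) p i.
  by rewrite [RHS]big_mkcond /=; apply: eq_bigr => i _; case: ifP; rewrite ?mulr1 ?mulr0.
have hsplit : \sum_(i < N) p i = \sum_(i < N | G i <= 0) p i + \sum_(i < N | 0 < G i) p i.
  rewrite (bigID (fun i => G i <= 0)); congr (_ + _).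
  by apply: eq_bigl => i; rewrite real_ltNge ?num_real.
rewrite p_sum1 in hsplit; lra.
Qed.

Lemma cvar_constraint_of_strict (G : 'I_N -> R) (I : {set 'I_N}) :
  (forall i, i \in I -> G i < 0) -> 1 - eps < \sum_(i in I) p i ->
  exists2 alpha, (forall i, 1 <= alpha i) & cvar_constraint eps p G alpha.
Proof.
move=> G_lt0 massI.
set q := \sum_(i < N | i \notin I) p i.
set M := \sum_(i < N | i \notin I) p i * `|G i|.
have q_lt_eps : q < eps.
  have : \sum_(i < N) p i = \sum_(i in I) p i + q by rewrite (bigID (mem I)).
  rewrite p_sum1; lra.
have M_ge0 : 0 <= M by apply: sumr_ge0 => i _; rewrite mulr_ge0.
(* beta = -t, s_i = |G i| + t off I and s_i = 0 on I; t is chosen to make the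
   budget constraint tight, and alpha_i = 1 + t / |G i| brings alpha_i G_i down
   to G_i - t on I. *)
pose t := M / (eps - q).
have t_ge0 : 0 <= t by rewrite divr_ge0 // subr_ge0 ltW.
have tM : t * (eps - q) = M by rewrite divfK // subr_eq0 gt_eqF.
exists (fun i => if i \in I then 1 + t / - G i else 1).
  move=> i; case: ifP => // /G_lt0 G_lt0i.
  by rewrite lerDl divr_ge0 // oppr_ge0 ltW.
exists (- t), (fun i => if i \in I then 0 else `|G i| + t).
split; first by rewrite oppr_le0.
split; first by move=> i; case: ifP => // _; rewrite addr_ge0.
split.
  rewrite (bigID (mem I)) /= big1 => [|i ->]; last by rewrite mulr0.
  rewrite add0r (eq_bigr (fun i => p i * `|G i| + p i * t)) => [|i /negbTE ->].
    by rewrite big_split /= -/M -mulr_suml -/q; lra.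
  by rewrite mulrDr.
move=> i; case: ifP => [/G_lt0 G_lt0i | _].
  rewrite mulrDl mul1r -mulrA invrN mulNr mulVf ?lt_eqF // mulrN1; lra.
by rewrite mul1r; have := ler_norm (G i); lra.
Qed.

End CVaRConstraint.

Section ConvexCombination.
Context {R : realType} {n : nat}.
Implicit Types (x y : 'rV[R]_n) (f : 'rV[R]_n -> R) (t : R).

Lemma dotv_comb (c x y : 'rV[R]_n) t :
  dotv c ((1 - t) *: x + t *: y) = (1 - t) * dotv c x + t * dotv c y.
Proof.
rewrite /dotv !mulr_sumr -big_split; apply: eq_bigr => k _.
by rewrite !mxE mulrDr !mulrA [c 0 k * _]mulrC [c 0 k * t]mulrC.
Qed.

Lemma dotv_comb_near (c x y : 'rV[R]_n) (e : R) : 0 < e ->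
  exists2 t, 0 < t <= 1 & dotv c ((1 - t) *: x + t *: y) <= dotv c x + e.
Proof.
move=> e_gt0; set d := dotv c y - dotv c x.
set w := e / (`|d| + 1).
have w_gt0 : 0 < w by rewrite divr_gt0 // ltr_wpDl.
have w_d : w * `|d| + w = e by rewrite -[w in _ + w]mulr1 -mulrDr divfK // gt_eqF ?ltr_wpDl.
set t := Num.min 1 w.
have t_gt0 : 0 < t by rewrite lt_min ltr01.
have t_le_w : t <= w by rewrite ge_min lexx orbT.
exists t; first by rewrite t_gt0 ge_min lexx.
have td : t * d <= t * `|d| := ler_wpM2l (ltW t_gt0) (ler_norm d).
have tw : t * `|d| <= w * `|d| := ler_wpM2r (normr_ge0 d) t_le_w.
rewrite dotv_comb; move: td tw; rewrite /d; lra.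
Qed.

Lemma convex_comb_le0 {f x y t} : convex_fun f -> 0 <= t <= 1 ->
  f x <= 0 -> f y <= 0 -> f ((1 - t) *: x + t *: y) <= 0.
Proof.
move=> cf /andP[t_ge0 t_le1] fx fy; apply: le_trans (cf x y t t_ge0 t_le1) _.
by rewrite -[0]addr0 lerD // mulr_ge0_le0 // subr_ge0.
Qed.

Lemma convex_comb_lt0 {f x y t} : convex_fun f -> 0 < t <= 1 ->
  f x <= 0 -> f y < 0 -> f ((1 - t) *: x + t *: y) < 0.
Proof.
move=> cf /andP[t_gt0 t_le1] fx fy; apply: (le_lt_trans (cf x y t (ltW t_gt0) t_le1)).
by rewrite -[0]addr0 ler_ltD ?mulr_ge0_le0 ?subr_ge0 // pmulr_rlt0.
Qed.

End ConvexCombination.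

Section CommonStrictPoint.
Context {R : realType} {n : nat} {I : eqType} {X : set 'rV[R]_n}.
Variables (f : I -> 'rV[R]_n -> R) (K : pred I).
Hypotheses (convX : convex_set X) (convf : forall k, K k -> convex_fun (f k)).

Lemma common_strict_point (x0 : 'rV[R]_n) (s : seq I) :
  X x0 -> (forall k, K k -> f k x0 <= 0) -> {subset s <= K} ->
  (forall i, i \in s -> exists z,
     X z /\ (forall k, K k -> f k z <= 0) /\ f i z < 0) ->
  exists y, [/\ X y, forall k, K k -> f k y <= 0 & forall i, i \in s -> f i y < 0].
Proof.
move=> Xx0 fx0; elim: s => [|a s IH] sK strict.
  by exists x0; split.
have [|y [Xy fy fy_lt0]] := IH (fun i si => sK i (mem_behead (s := a :: s) si)).
  by move=> i si; apply: strict; rewrite inE si orbT.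
have [z [Xz [fz fz_lt0]]] := strict a (mem_head a s).
have half_gt0 : 0 < (2^-1 : R) <= 1 by rewrite invr_gt0 ltr0n invf_le1 ?ler1n.
have half_ge0 : 0 <= (2^-1 : R) <= 1 by case/andP: half_gt0 => /ltW -> ->.
have half_sym : (1 - 2^-1) *: y + 2^-1 *: z = (1 - 2^-1) *: z + 2^-1 *: y :> 'rV[R]_n.
  have half : 1 - 2^-1 = 2^-1 :> R by rewrite {1}(splitr 1) mul1r addrK.
  by rewrite half addrC.
exists ((1 - 2^-1) *: y + 2^-1 *: z); split.
- by case/andP: half_ge0 => ? ?; apply: convX.
- by move=> k Kk; apply: convex_comb_le0 (convf k Kk) half_ge0 (fy k Kk) (fz k Kk).
- move=> i /[dup] /sK Ki; rewrite inE => /predU1P[ia | si].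
    rewrite ia in Ki *.
    exact: convex_comb_lt0 (convf a Ki) half_gt0 (fy a Ki) fz_lt0.
  rewrite half_sym.
  exact: convex_comb_lt0 (convf i Ki) half_gt0 (fz i Ki) (fy_lt0 i si).
Qed.

End CommonStrictPoint.

Section CVaRValue.
Context {R : realType} {n N : nat} {X : set 'rV[R]_n} {c : 'rV[R]_n} {eps : R}.
Context {p : 'I_N -> R} {g : 'rV[R]_n -> 'I_N -> R}.
Hypotheses (p_ge0 : forall i, 0 <= p i) (p_sum1 : \sum_(i < N) p i = 1).

Lemma chance_lb_le_vCVaR_S (v : R) : 0 <= eps ->
  (forall x, cc_feasible X eps p g x -> v <= dotv c x) ->
  (v%:E <= vCVaR_S X c eps p g)%E.
Proof.
move=> eps_ge0 lb; apply/ereal_infP => _ [alpha alpha_ge1 <-].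
apply/ereal_infP => _ [x [Xx cons] <-]; rewrite lee_fin; apply: lb; split => //.
exact: cvar_constraint_chance p_ge0 p_sum1 _ _ eps_ge0 alpha_ge1 cons.
Qed.

Lemma vCVaR_S_le_strict_point (I : {set 'I_N}) (x : 'rV[R]_n) :
  X x -> (forall i, i \in I -> g x i < 0) -> 1 - eps < \sum_(i in I) p i ->
  (vCVaR_S X c eps p g <= (dotv c x)%:E)%E.
Proof.
move=> Xx gx_lt0 massI.
have [alpha alpha_ge1 cons] := cvar_constraint_of_strict p_ge0 p_sum1 (g x) I gx_lt0 massI.
apply: ge_ereal_inf; exists (vCVaR X c eps p g alpha); first by exists alpha.
by apply: ge_ereal_inf; exists (dotv c x)%:E => //; exists x.
Qed.

End CVaRValue.

Theorem theorem2 (R : realType) (n N J' : nat) (Xi : Type)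
  (X : set 'rV[R]_n) (c : 'rV[R]_n) (eps : R)
  (xi : 'I_N -> Xi) (p : 'I_N -> R)
  (gj : 'I_J'.+1 -> 'rV[R]_n -> Xi -> R)
  (xstar : 'rV[R]_n) (Ibar : {set 'I_N}) :
  0 < eps -> eps < 1 ->
  (forall i, 0 <= p i) -> \sum_(i < N) p i = 1 ->
  (* x* is an optimal solution of the chance-constrained program *)
  cc_feasible X eps p (fun x i => gmax gj x (xi i)) xstar ->
  (forall x, cc_feasible X eps p (fun x i => gmax gj x (xi i)) x ->
     dotv c xstar <= dotv c x) ->
  convex_set X ->
  (forall i, gmax gj xstar (xi i) <= 0 -> convex_fun (fun x => gmax gj x (xi i))) ->
  (* Ibar is a subset of Ibar* *)
  (forall i, i \in Ibar -> gmax gj xstar (xi i) <= 0) ->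
  (* (i) Slater-type points in Xbar* *)
  (forall i, i \in Ibar -> exists xi_pt : 'rV[R]_n,
     X xi_pt /\
     (forall k, gmax gj xstar (xi k) <= 0 -> gmax gj xi_pt (xi k) <= 0) /\
     gmax gj xi_pt (xi i) < 0) ->
  (* (ii) *)
  1 - eps < \sum_(i in Ibar) p i ->
  (dotv c xstar)%:E = vCVaR_S X c eps p (fun x i => gmax gj x (xi i)).
Proof.
move=> eps_gt0 _ p_ge0 p_sum1 [Xxs _] xs_opt convX convg Ibar_act slater massIbar.
have eps_ge0 := ltW eps_gt0.
apply/eqP; rewrite eq_le chance_lb_le_vCVaR_S //=.
pose act k := gmax gj xstar (xi k) <= 0.
have act_enum : {subset enum Ibar <= act} by move=> k; rewrite mem_enum => /Ibar_act.
have slater_enum i : i \in enum Ibar -> exists z, X z /\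
    (forall k, act k -> gmax gj z (xi k) <= 0) /\ gmax gj z (xi i) < 0.
  by rewrite mem_enum => /slater.
have [y [Xy _ y_lt0]] := common_strict_point (fun k x => gmax gj x (xi k))
  act convX convg xstar (enum Ibar) Xxs (fun k => id) act_enum slater_enum.
apply/lee_addgt0Pr => e e_gt0.
have [t t01 near] := dotv_comb_near c xstar y e e_gt0.
rewrite -EFinD; apply: le_trans (vCVaR_S_le_strict_point p_ge0 p_sum1 Ibar
  ((1 - t) *: xstar + t *: y) _ _ massIbar) _.
- by case/andP: t01 => /ltW t_ge0 t_le1; apply: convX.
- move=> i Ibar_i; have act_i := Ibar_act i Ibar_i.
  by apply: convex_comb_lt0 (convg i act_i) t01 act_i (y_lt0 i _); rewrite mem_enum.
- by rewrite lee_fin.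
Qed.
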